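(* Let $0\le\Delta'\le\Delta\le1/8$ with $\Delta>0$, let $\xi\ge100$ be such that $m=\Delta^{-2}/\xi$ is a positive integer, let $\mathcal{D}=\mathcal{B}(1/2+\Delta)^{\otimes m}$ and $\mathcal{D}'=\mathcal{B}(1/2+\Delta')^{\otimes m}$, where $\mathcal{B}(\mu)$ is the Bernoulli distribution with mean $\mu$. Let $\mathcal{X}$ be any probability distribution on a sample space $X$. Then for any event $A\subseteq\{0,1\}^m\times X$ with $\Pr_{\mathcal{D}\otimes\mathcal{X}}[A]\le\gamma$, and any $Q\ge\xi$, $$\Pr_{\mathcal{D}'\otimes\mathcal{X}}[A]\le\gamma\cdot\exp\!\left(5\sqrt{(3\ln Q)/\xi}\right)+Q^{-6}.$$ *)

From Stdlib Require Import Reals List.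
Import ListNotations.
Open Scope R_scope.
Set Implicit Arguments.

Fixpoint bitvecs (m : nat) : list (list bool) :=
  match m with
  | O => [nil]
  | S k => map (cons false) (bitvecs k) ++ map (cons true) (bitvecs k)
  end.

Definition bern (mu : R) (b : bool) : R := if b then mu else 1 - mu.

Fixpoint bern_prod (mu : R) (s : list bool) : R :=
  match s with
  | nil => 1
  | b :: s' => bern mu b * bern_prod mu s'
  end.

Record ProbSpace (X : Type) := {
  meas : (X -> Prop) -> Prop;
  P : (X -> Prop) -> R;
  meas_full : meas (fun _ => True);
  meas_compl : forall E, meas E -> meas (fun x => ~ E x);
  meas_union : forall F : nat -> X -> Prop,
      (forall n, meas (F n)) -> meas (fun x => exists n, F n x);
  P_nonneg : forall E, meas E -> 0 <= P E;
  P_full : P (fun _ => True) = 1;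
  P_sigma_additive : forall F : nat -> X -> Prop,
      (forall n, meas (F n)) ->
      (forall i j x, i <> j -> F i x -> F j x -> False) ->
      infinite_sum (fun n => P (F n)) (P (fun x => exists n, F n x))
}.

(* A is given by its sections A b ⊆ X (b ∈ {0,1}^m); since {0,1}^m is finite
   and discrete, A is measurable in the product iff every section is, and the
   product measure is  sum_b Pr_{B(mu)^m}[b] * PX(A_b). *)
Definition prod_prob (X : Type) (m : nat) (mu : R) (PX : ProbSpace X)
  (A : list bool -> X -> Prop) : R :=
  fold_right Rplus 0 (map (fun b => bern_prod mu b * P PX (A b)) (bitvecs m)).

(* Write q = 1/2 + Delta, q' = 1/2 + Delta' and, for a bit string b, d(b), d'(b)
   for its probabilities under B(q)^m and B(q')^m.  For every s >= 0 and every
   threshold c, a pointwise case split on d'(b) <= e^c d(b) gives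
       d'(b) P(A_b) <= e^c d(b) P(A_b) + e^{-sc} d'(b) (d'(b)/d(b))^s,
   and summing over b bounds Pr'[A] by e^c Pr[A] plus e^{-sc} times the
   "tilted mass" sum_b d' (d'/d)^s.  The tilted mass factorises over the m
   coordinates into M(s)^m, where M(s) = E_{B(q')}[exp(s ln(d'/d))] is a
   two-point moment generating function; Hoeffding's lemma together with the
   chi-square bound on the Kullback-Leibler divergence gives
   M(s) <= exp(Delta^2 (64 s/15 + 49 s^2/18)).  With m Delta^2 xi = 1,
   c = 5 sqrt(3 ln Q / xi) and s = 12 ln Q / c the error term is at most
   exp(-6 ln Q) = Q^{-6}. *)

From Stdlib Require Import Reals List Lra Classical FunctionalExtensionality PropExtensionality.
From Coquelicot Require Import Coquelicot.
Open Scope R_scope.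

Lemma exp_le_mono x y : x <= y -> exp x <= exp y.
Proof.
  intros [hlt | ->]; [left; now apply exp_increasing | lra].
Qed.

Lemma ln_le_sub1 x : 0 < x -> ln x <= x - 1.
Proof.
  intros hx. pose proof (exp_ineq1_le (ln x)) as h. rewrite exp_ln in h; lra.
Qed.

Lemma exp_pow x n : exp x ^ n = exp (INR n * x).
Proof.
  rewrite <- Rpower_pow by apply exp_pos. unfold Rpower. now rewrite ln_exp.
Qed.

Lemma pow_le_exp x a m : 0 <= x -> x <= exp a -> x ^ m <= exp (INR m * a).
Proof.
  intros hx hxa. rewrite <- exp_pow. now apply pow_incr.
Qed.

Lemma inv_pow6_exp Q : 0 < Q -> / Q ^ 6 = exp (- 6 * ln Q).
Proof.
  intros hQ. replace (- 6 * ln Q) with (- (INR 6 * ln Q)) by (simpl; ring).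
  rewrite exp_Ropp, <- ln_pow, exp_ln by (try apply pow_lt; lra). reflexivity.
Qed.

Lemma antitone_of_nonpos_derive (f f' : R -> R) :
  (forall x, is_derive f x (f' x)) -> (forall x, f' x <= 0) ->
  forall x y, x <= y -> f y <= f x.
Proof.
  intros hd hneg x y [hxy | <-]; [|lra].
  destruct (MVT_cor2 f f' x y hxy) as [c [hc _]].
  { intros c _. apply is_derive_Reals, hd. }
  pose proof (hneg c). nra.
Qed.

Lemma concave_critical_zero (f f1 f2 : R -> R) :
  (forall x, is_derive f x (f1 x)) -> (forall x, is_derive f1 x (f2 x)) ->
  (forall x, f2 x <= 0) -> f 0 = 0 -> f1 0 = 0 -> forall x, f x <= 0.
Proof.
  intros hd1 hd2 hconc hf0 hf10 x.
  assert (hslope : forall y z, y <= z -> f1 z <= f1 y)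
    by exact (antitone_of_nonpos_derive f1 f2 hd2 hconc).
  destruct (Rtotal_order x 0) as [hx | [-> | hx]]; [| lra |].
  - destruct (MVT_cor2 f f1 x 0 hx) as [c [hc hcx]].
    { intros c _. apply is_derive_Reals, hd1. }
    pose proof (hslope c 0 (Rlt_le _ _ (proj2 hcx))). nra.
  - destruct (MVT_cor2 f f1 0 x hx) as [c [hc hcx]].
    { intros c _. apply is_derive_Reals, hd1. }
    pose proof (hslope 0 c (Rlt_le _ _ (proj1 hcx))). nra.
Qed.

Section Hoeffding.
Variable p : R.
Hypothesis hp : 0 <= p <= 1.

Let denom_pos x : 0 < 1 - p + p * exp x.
Proof. pose proof (exp_pos x). nra. Qed.

(* The gap between the log moment generating function of a Bernoulli(p)
   variable and its Hoeffding bound p x + x^2/8, with its two derivatives. *)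
Let gap x := ln (1 - p + p * exp x) - p * x - x ^ 2 / 8.
Let gap1 x := p * exp x / (1 - p + p * exp x) - p - x / 4.
Let gap2 x := p * (1 - p) * exp x / (1 - p + p * exp x) ^ 2 - 1 / 4.

Let gap_derive x : is_derive gap x (gap1 x).
Proof.
  unfold gap, gap1. pose proof (denom_pos x). auto_derive; [lra | field; lra].
Qed.

Let gap1_derive x : is_derive gap1 x (gap2 x).
Proof.
  unfold gap1, gap2. pose proof (denom_pos x). auto_derive; [lra | field; lra].
Qed.

(* The variance of a Bernoulli variable is at most 1/4 (AM-GM on the
   tilted weights), so the gap is concave. *)
Let gap2_nonpos x : gap2 x <= 0.
Proof.
  unfold gap2. pose proof (denom_pos x). pose proof (exp_pos x).
  set (D := 1 - p + p * exp x) in *.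
  assert (hvar : p * (1 - p) * exp x <= 1 / 4 * D ^ 2)
    by (unfold D; pose proof (pow2_ge_0 (1 - p - p * exp x)); nra).
  assert (p * (1 - p) * exp x / D ^ 2 <= 1 / 4); [|lra].
  apply Rle_div_l; nra.
Qed.

Lemma hoeffding_two_point y z :
  p * exp y + (1 - p) * exp z <= exp (p * y + (1 - p) * z + (y - z) ^ 2 / 8).
Proof.
  assert (hgap : gap (y - z) <= 0).
  { apply (concave_critical_zero gap gap1 gap2 gap_derive gap1_derive gap2_nonpos).
    - unfold gap. rewrite exp_0, Rmult_1_r. replace (1 - p + p) with 1 by ring.
      rewrite ln_1. lra.
    - unfold gap1. rewrite exp_0. field. lra. }
  unfold gap in hgap.
  assert (hmgf : 1 - p + p * exp (y - z) <= exp (p * (y - z) + (y - z) ^ 2 / 8)).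
  { rewrite <- (exp_ln (1 - p + p * exp (y - z))) by apply denom_pos.
    apply exp_le_mono. lra. }
  replace (exp y) with (exp z * exp (y - z)) by (rewrite <- exp_plus; f_equal; ring).
  replace (exp (p * y + (1 - p) * z + (y - z) ^ 2 / 8))
    with (exp z * exp (p * (y - z) + (y - z) ^ 2 / 8))
    by (rewrite <- exp_plus; f_equal; ring).
  pose proof (exp_pos z). nra.
Qed.

End Hoeffding.

Definition sum_over {T : Type} (l : list T) (f : T -> R) : R :=
  fold_right Rplus 0 (map f l).

Lemma sum_over_app {T : Type} (l1 l2 : list T) f :
  sum_over (l1 ++ l2) f = sum_over l1 f + sum_over l2 f.
Proof.
  unfold sum_over. induction l1 as [|x l1 IH]; simpl; [ring | rewrite IH; ring].
Qed.

Lemma sum_over_map {T U : Type} (g : T -> U) l f :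
  sum_over (map g l) f = sum_over l (fun x => f (g x)).
Proof. unfold sum_over. now rewrite map_map. Qed.

Lemma sum_over_plus {T : Type} (l : list T) f g :
  sum_over l (fun x => f x + g x) = sum_over l f + sum_over l g.
Proof.
  unfold sum_over. induction l as [|x l IH]; simpl; [ring | rewrite IH; ring].
Qed.

Lemma sum_over_scal {T : Type} (l : list T) c f :
  sum_over l (fun x => c * f x) = c * sum_over l f.
Proof.
  unfold sum_over. induction l as [|x l IH]; simpl; [ring | rewrite IH; ring].
Qed.

Lemma sum_over_le {T : Type} (l : list T) f g :
  (forall x, In x l -> f x <= g x) -> sum_over l f <= sum_over l g.
Proof.
  unfold sum_over. induction l as [|x l IH]; simpl; intros hle; [lra|].
  apply Rplus_le_compat; [apply hle | apply IH]; auto.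
Qed.

Lemma sum_bitvecs_multiplicative (f : bool -> R) (F : list bool -> R) m :
  F nil = 1 -> (forall b l, F (b :: l) = f b * F l) ->
  sum_over (bitvecs m) F = (f false + f true) ^ m.
Proof.
  intros hnil hcons. induction m as [|m IH]; simpl.
  - unfold sum_over. simpl. rewrite hnil. ring.
  - rewrite sum_over_app, !sum_over_map.
    assert (hfactor : forall b, (fun l => F (b :: l)) = (fun l => f b * F l))
      by (intros b; apply functional_extensionality; intros l; apply hcons).
    rewrite !hfactor, !sum_over_scal, IH. ring.
Qed.

(* In a probability space every measurable event has probability in [0, 1];
   the upper bound comes from additivity over the partition {E, not E}. *)
Lemma prob_bounds {X : Type} (PX : ProbSpace X) E : meas PX E -> 0 <= P PX E <= 1.
Proof.
  intros hE. split; [now apply P_nonneg|].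
  set (F := fun n : nat => match n with
                           | 0%nat => E | 1%nat => fun x => ~ E x | _ => fun _ => False
                           end).
  assert (hF : forall n, meas PX (F n)).
  { intros [|[|n]]; simpl; [exact hE | now apply meas_compl |].
    assert (hempty : (fun _ : X => False) = (fun x => ~ True)).
    { apply functional_extensionality. intros x.
      apply propositional_extensionality. tauto. }
    rewrite hempty. apply meas_compl, meas_full. }
  assert (hdisj : forall i j x, i <> j -> F i x -> F j x -> False)
    by (intros [|[|i]] [|[|j]] x hij; simpl; tauto).
  assert (hcover : (fun x => exists n, F n x) = (fun _ => True)).
  { apply functional_extensionality. intros x. apply propositional_extensionality.
    split; [tauto | intros _].
    destruct (classic (E x)); [now exists 0%nat | now exists 1%nat]. }
  pose proof (P_sigma_additive PX F hF hdisj) as hsum.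
  rewrite hcover, P_full in hsum.
  assert (hgrow : Un_growing (sum_f_R0 (fun n => P PX (F n)))).
  { intros n. cbn [sum_f_R0]. pose proof (P_nonneg PX _ (hF (S n))). lra. }
  pose proof (growing_ineq _ _ hgrow hsum 1%nat) as h1. cbn [sum_f_R0] in h1.
  pose proof (P_nonneg PX _ (hF 1%nat)). simpl F in *. lra.
Qed.

(* The s-tilted mass d' (d'/d)^s of an outcome with probabilities d and d'
   under two distributions; summed over outcomes it is E_{d'}[(d'/d)^s]. *)
Definition tilt (s d d' : R) : R := d' * exp (s * ln (d' / d)).

Lemma tilt_one s : tilt s 1 1 = 1.
Proof. unfold tilt. rewrite Rdiv_1_r, ln_1, Rmult_0_r, exp_0. ring. Qed.

Lemma tilt_pos s d d' : 0 < d' -> 0 < tilt s d d'.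
Proof. intros hd'. unfold tilt. pose proof (exp_pos (s * ln (d' / d))). nra. Qed.

Lemma tilt_mult s d1 d2 d1' d2' :
  0 < d1 -> 0 < d2 -> 0 < d1' -> 0 < d2' ->
  tilt s (d1 * d2) (d1' * d2') = tilt s d1 d1' * tilt s d2 d2'.
Proof.
  intros h1 h2 h1' h2'. unfold tilt.
  replace (d1' * d2' / (d1 * d2)) with (d1' / d1 * (d2' / d2)) by (field; lra).
  rewrite ln_mult, Rmult_plus_distr_l, exp_plus by (apply Rdiv_lt_0_compat; lra).
  ring.
Qed.

(* Pointwise change of measure: for any threshold c and s >= 0, the mass d' p
   of an event of probability p is controlled either by e^c d p (when
   d' <= e^c d) or else by the tilted mass, since then (d'/d)^s >= e^{sc}. *)
Lemma pointwise_change_of_measure d d' p c s :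
  0 < d -> 0 < d' -> 0 <= p <= 1 -> 0 <= s ->
  d' * p <= exp c * (d * p) + exp (- s * c) * tilt s d d'.
Proof.
  intros hd hd' hp hs. unfold tilt.
  pose proof (exp_pos c). pose proof (exp_pos (- s * c)).
  pose proof (exp_pos (s * ln (d' / d))).
  destruct (Rle_or_lt d' (exp c * d)) as [hsmall | hlarge].
  - assert (0 <= exp (- s * c) * (d' * exp (s * ln (d' / d)))) by
      (apply Rmult_le_pos; [lra | apply Rmult_le_pos; lra]).
    nra.
  - assert (hratio : c <= ln (d' / d)).
    { rewrite <- (ln_exp c). apply ln_le; [apply exp_pos|].
      apply Rle_div_r; lra. }
    assert (hweight : 1 <= exp (- s * c) * exp (s * ln (d' / d))).
    { rewrite <- exp_plus, <- exp_0. apply exp_le_mono. nra. }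
    nra.
Qed.

Lemma bern_pos mu b : 0 < mu < 1 -> 0 < bern mu b.
Proof. destruct b; simpl; lra. Qed.

Lemma bern_prod_pos mu l : 0 < mu < 1 -> 0 < bern_prod mu l.
Proof.
  intros hmu. induction l as [|b l IH]; simpl; [lra|].
  pose proof (bern_pos mu b hmu). nra.
Qed.

(* The moment generating function of the log-likelihood ratio ln(d'/d) of a
   single B(q') bit against B(q), at parameter s. *)
Definition bit_mgf (s q q' : R) : R := tilt s (1 - q) (1 - q') + tilt s q q'.

Lemma change_of_measure {X : Type} (PX : ProbSpace X) (A : list bool -> X -> Prop) m q q' c s :
  0 < q < 1 -> 0 < q' < 1 -> 0 <= s ->
  (forall b, In b (bitvecs m) -> meas PX (A b)) ->
  prod_prob m q' PX A
    <= exp c * prod_prob m q PX A + exp (- s * c) * bit_mgf s q q' ^ m.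
Proof.
  intros hq hq' hs hmeas.
  assert (htotal : sum_over (bitvecs m) (fun b => tilt s (bern_prod q b) (bern_prod q' b))
                   = bit_mgf s q q' ^ m).
  { apply (sum_bitvecs_multiplicative (fun b => tilt s (bern q b) (bern q' b)));
      [apply tilt_one|].
    intros b l. simpl. apply tilt_mult; auto using bern_pos, bern_prod_pos. }
  change (prod_prob m q' PX A) with
    (sum_over (bitvecs m) (fun b => bern_prod q' b * P PX (A b))).
  change (prod_prob m q PX A) with
    (sum_over (bitvecs m) (fun b => bern_prod q b * P PX (A b))).
  rewrite <- htotal, <- !sum_over_scal, <- sum_over_plus.
  apply sum_over_le. intros b hb.
  apply pointwise_change_of_measure; auto using bern_prod_pos, prob_bounds.
Qed.

Lemma bernoulli_kl_le_chi2 q q' :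
  0 < q < 1 -> 0 < q' < 1 ->
  q' * ln (q' / q) + (1 - q') * ln ((1 - q') / (1 - q)) <= (q' - q) ^ 2 / (q * (1 - q)).
Proof.
  intros hq hq'.
  pose proof (ln_le_sub1 (q' / q) ltac:(apply Rdiv_lt_0_compat; lra)) as hu.
  pose proof (ln_le_sub1 ((1 - q') / (1 - q)) ltac:(apply Rdiv_lt_0_compat; lra)) as hv.
  apply Rle_trans with (q' * (q' / q - 1) + (1 - q') * ((1 - q') / (1 - q) - 1)).
  - apply Rplus_le_compat; apply Rmult_le_compat_l; lra.
  - right. field. lra.
Qed.

Lemma log_ratio_spread q q' :
  0 < q' <= q -> q < 1 ->
  0 <= ln ((1 - q') / (1 - q)) - ln (q' / q) <= (q - q') * (1 / (1 - q) + 1 / q').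
Proof.
  intros hq' hq.
  assert (hv0 : 0 <= ln ((1 - q') / (1 - q))).
  { rewrite <- ln_1. apply ln_le; [lra | apply Rle_div_r; lra]. }
  assert (hv : ln ((1 - q') / (1 - q)) <= (q - q') / (1 - q)).
  { eapply Rle_trans; [apply ln_le_sub1, Rdiv_lt_0_compat; lra | right; field; lra]. }
  assert (hu : - ln (q' / q) <= (q - q') / q').
  { rewrite <- ln_Rinv by (apply Rdiv_lt_0_compat; lra).
    eapply Rle_trans; [apply ln_le_sub1, Rinv_0_lt_compat, Rdiv_lt_0_compat; lra |].
    right. field. lra. }
  assert (hu0 : 0 <= - ln (q' / q)).
  { rewrite <- ln_Rinv, <- ln_1 by (apply Rdiv_lt_0_compat; lra).
    apply ln_le; [lra|]. rewrite Rinv_div. apply Rle_div_r; lra. }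
  split; [lra|].
  replace ((q - q') * (1 / (1 - q) + 1 / q')) with ((q - q') / (1 - q) + (q - q') / q')
    by (field; lra).
  lra.
Qed.

Lemma bit_mgf_hoeffding s q q' :
  0 < q < 1 -> 0 < q' < 1 ->
  bit_mgf s q q' <=
  exp (s * (q' * ln (q' / q) + (1 - q') * ln ((1 - q') / (1 - q)))
       + s ^ 2 * (ln ((1 - q') / (1 - q)) - ln (q' / q)) ^ 2 / 8).
Proof.
  intros hq hq'. unfold bit_mgf, tilt.
  set (u := ln (q' / q)). set (v := ln ((1 - q') / (1 - q))).
  rewrite Rplus_comm.
  eapply Rle_trans; [apply (hoeffding_two_point q'); lra |].
  right. f_equal. field.
Qed.

Lemma bit_mgf_small_bias s Delta Delta' :
  0 <= Delta' -> Delta' <= Delta -> Delta <= 1 / 8 -> 0 <= s ->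
  bit_mgf s (1 / 2 + Delta) (1 / 2 + Delta')
    <= exp (Delta ^ 2 * (64 * s / 15 + 49 * s ^ 2 / 18)).
Proof.
  intros h0 hle h8 hs.
  set (q := 1 / 2 + Delta). set (q' := 1 / 2 + Delta').
  assert (hq : 0 < q < 1) by (unfold q; lra).
  assert (hq' : 0 < q' < 1) by (unfold q'; lra).
  eapply Rle_trans; [now apply bit_mgf_hoeffding|]. apply exp_le_mono.
  assert (hkl : q' * ln (q' / q) + (1 - q') * ln ((1 - q') / (1 - q)) <= 64 * Delta ^ 2 / 15).
  { eapply Rle_trans; [now apply bernoulli_kl_le_chi2|].
    assert (15 / 64 <= q * (1 - q)) by (unfold q; nra).
    assert ((q' - q) ^ 2 <= Delta ^ 2) by (unfold q, q'; nra).
    apply Rle_div_l; nra. }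
  assert (hspread : (ln ((1 - q') / (1 - q)) - ln (q' / q)) ^ 2 <= 196 * Delta ^ 2 / 9).
  { destruct (log_ratio_spread q q') as [hlo hhi]; [unfold q, q'; lra | lra |].
    assert (hbound : (q - q') * (1 / (1 - q) + 1 / q') <= 14 * Delta / 3).
    { assert (1 / (1 - q) <= 8 / 3) by (apply Rle_div_l; unfold q; lra).
      assert (1 / q' <= 2) by (apply Rle_div_l; unfold q'; lra).
      assert (0 <= q - q' <= Delta) by (unfold q, q'; lra). nra. }
    nra. }
  assert (s * (q' * ln (q' / q) + (1 - q') * ln ((1 - q') / (1 - q))) <= s * (64 * Delta ^ 2 / 15))
    by (apply Rmult_le_compat_l; lra).
  assert (s ^ 2 * (ln ((1 - q') / (1 - q)) - ln (q' / q)) ^ 2 <= s ^ 2 * (196 * Delta ^ 2 / 9))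
    by (apply Rmult_le_compat_l; nra).
  lra.
Qed.

Lemma product_mgf_small_bias m s Delta Delta' xi :
  0 <= Delta' -> Delta' <= Delta -> 0 < Delta -> Delta <= 1 / 8 -> 0 < xi -> 0 <= s ->
  INR m = / Delta ^ 2 / xi ->
  bit_mgf s (1 / 2 + Delta) (1 / 2 + Delta') ^ m
    <= exp ((64 * s / 15 + 49 * s ^ 2 / 18) / xi).
Proof.
  intros h0 hle hpos h8 hxi hs hm.
  replace ((64 * s / 15 + 49 * s ^ 2 / 18) / xi)
    with (INR m * (Delta ^ 2 * (64 * s / 15 + 49 * s ^ 2 / 18)))
    by (rewrite hm; field; lra).
  apply pow_le_exp; [apply Rlt_le, Rplus_lt_0_compat; apply tilt_pos; lra |].
  now apply bit_mgf_small_bias.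
Qed.

Lemma threshold_square L xi :
  0 < L -> 0 < xi ->
  0 < 5 * sqrt (3 * L / xi) /\ (5 * sqrt (3 * L / xi)) ^ 2 * xi = 75 * L.
Proof.
  intros hL hxi.
  assert (hpos : 0 < 3 * L / xi) by (apply Rdiv_lt_0_compat; lra).
  split.
  - pose proof (sqrt_lt_R0 _ hpos). lra.
  - replace ((5 * sqrt (3 * L / xi)) ^ 2) with (25 * (sqrt (3 * L / xi) * sqrt (3 * L / xi)))
      by ring.
    rewrite sqrt_sqrt by lra. field. lra.
Qed.

(* With s = 12 L / c, the exponent of the error term -s c + (64 s/15 + 49 s^2/18)/xi
   is at most -6 L: the first term is -12 L, the quadratic one is 392 L / 75,
   and the linear one is at most 768 L / 1275 because c xi >= 85. *)
Lemma error_exponent_budget L xi c :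
  1 < L -> 100 <= xi -> 0 < c -> c ^ 2 * xi = 75 * L ->
  - (12 * L / c) * c + (64 * (12 * L / c) / 15 + 49 * (12 * L / c) ^ 2 / 18) / xi
    <= - 6 * L.
Proof.
  intros hL hxi hc hc2.
  assert (hcxi : 85 <= c * xi) by nra.
  assert (hlin : 64 * (12 * L / c) / 15 / xi <= 768 * L / (15 * 85)).
  { replace (64 * (12 * L / c) / 15 / xi) with (768 * L / (15 * (c * xi)))
      by (field; lra).
    apply Rmult_le_compat_l; [lra|]. apply Rinv_le_contravar; lra. }
  assert (hquad : 49 * (12 * L / c) ^ 2 / 18 / xi = 392 * L / 75).
  { replace (49 * (12 * L / c) ^ 2 / 18 / xi) with (49 * 144 * L * L / (18 * (c ^ 2 * xi)))
      by (field; lra).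
    rewrite hc2. field. lra. }
  replace (- (12 * L / c) * c) with (- 12 * L) by (field; lra).
  rewrite Rdiv_plus_distr. lra.
Qed.

Theorem mainTheorem11 (Delta Delta' xi gamma Q : R) (m : nat) (X : Type)
  (PX : ProbSpace X) (A : list bool -> X -> Prop) :
  0 <= Delta' -> Delta' <= Delta -> 0 < Delta -> Delta <= 1/8 ->
  100 <= xi -> (0 < m)%nat -> INR m = / (Delta ^ 2) / xi ->
  (forall b, In b (bitvecs m) -> meas PX (A b)) ->
  prod_prob m (1/2 + Delta) PX A <= gamma ->
  xi <= Q ->
  prod_prob m (1/2 + Delta') PX A
    <= gamma * exp (5 * sqrt (3 * ln Q / xi)) + / (Q ^ 6).
Proof.
  intros h0 hle hpos h8 hxi _ hm hmeas hgamma hQ.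
  set (L := ln Q). set (c := 5 * sqrt (3 * L / xi)). set (s := 12 * L / c).
  assert (hL : 1 < L).
  { unfold L. rewrite <- (ln_exp 1). apply ln_increasing; [apply exp_pos|].
    pose proof exp_le_3. lra. }
  destruct (threshold_square L xi) as [hc hc2]; [lra | lra |].
  fold c in hc, hc2.
  assert (hs : 0 <= s) by (unfold s; apply Rlt_le, Rdiv_lt_0_compat; lra).
  assert (hmgf := product_mgf_small_bias m s Delta Delta' xi h0 hle hpos h8 ltac:(lra) hs hm).
  assert (herror : exp (- s * c) * bit_mgf s (1 / 2 + Delta) (1 / 2 + Delta') ^ m <= / Q ^ 6).
  { rewrite inv_pow6_exp by lra. fold L.
    eapply Rle_trans; [apply Rmult_le_compat_l; [apply Rlt_le, exp_pos | exact hmgf]|].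
    rewrite <- exp_plus. apply exp_le_mono. now apply error_exponent_budget. }
  assert (hq : 0 < 1 / 2 + Delta < 1) by lra.
  assert (hq' : 0 < 1 / 2 + Delta' < 1) by lra.
  pose proof (change_of_measure PX A m _ _ c s hq hq' hs hmeas) as hchange.
  assert (exp c * prod_prob m (1 / 2 + Delta) PX A <= gamma * exp c)
    by (rewrite Rmult_comm; apply Rmult_le_compat_r; [apply Rlt_le, exp_pos | exact hgamma]).
  lra.
Qed.
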